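(* Assume the setup (S) of the context and let $\mathbb{A}$ be the sequence defined there. Then $\mathbb{A}$ is a complex.
   Context: Setup (S): $R$ is a Noetherian unique factorization domain with $1/2\in R$; $p\ge1$, $q\ge3$, $n=p+2$; $B_0=R^{q-2}$, $B_1=R^{p+q}$, $H=R^n$. On $H\oplus H^*$ let $Q(f,f')=f'(f)$ and $\beta\big((f,f'),(g,g')\big)=f'(g)+g'(f)$, which identifies $(H\oplus H^* )^*$ with $H\oplus H^*$. Let $\mathbb{B}\colon 0\to B_0^*\xrightarrow{\delta_4}B_1^*\xrightarrow{\delta_3}H\oplus H^*\xrightarrow{\delta_2}B_1\xrightarrow{\delta_1}B_0$ be an acyclic complex with $\delta_2=\delta_3^*$ and $\delta_1=\delta_4^*$ (duals taken using $\beta$). The Clifford action of $H\oplus H^*$ on $\bigwedge H$ is $(f,f')\cdot\omega=f\wedge\omega+\iota_{f'}(\omega)$, where $\iota_{f'}(e_1\wedge\cdots\wedge e_j)=\sum_i(-1)^{i-1}f'(e_i)\,e_1\wedge\cdots\widehat{e_i}\cdots\wedge e_j$. Let $s\in\bigwedge^{\mathrm{odd}}H$ (the spinor coordinates of $\mathbb{B}$) be an element such that for every prime $\mathfrak p\notin\operatorname{Supp}H_0(\mathbb{B})$, the image of $s$ generates the $R_{\mathfrak p}$-module $\{\omega\in\bigwedge H_{\mathfrak p}: x\cdot\omega=0\ \forall x\in(\operatorname{im}\delta_3)_{\mathfrak p}\}$. Let $s_1\in H$ be the degree-one component of $s$, and let $u\in B_1^*$ be any element with $\delta_3(u)=(s_1,0)$.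 Define $\mathbb{A}\colon 0\to B_0^*\oplus R\xrightarrow{d_3}B_1^*\xrightarrow{d_2}H^*\xrightarrow{d_1}R$ by $d_3(b,r)=\delta_4(b)+ru$; $d_2=\pi_{H^*}\circ\delta_3$, where $\pi_{H^*}\colon H\oplus H^*\to H^*$ is the projection (equivalently $d_2$ is the dual of $\delta_2|_H$); $d_1(f')=f'(s_1)$. Let $I=I_H=\operatorname{im}d_1$, the ideal generated by the coordinates of $s_1$. *)

From HB Require Import structures.
From mathcomp Require Import all_boot all_order all_algebra.
Set Implicit Arguments.
Unset Strict Implicit.
Unset Printing Implicit Defensive.
Import GRing.Theory.
Local Open Scope ring_scope.

Definition is_ideal (R : comNzRingType) (I : R -> Prop) : Prop :=
  [/\ I 0, (forall a b, I a -> I b -> I (a + b)) & (forall r a, I a -> I (r * a))].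

Definition is_prime_ideal (R : comNzRingType) (P : R -> Prop) : Prop :=
  [/\ is_ideal P, ~ P 1 & (forall a b, P (a * b) -> P a \/ P b)].

Definition noetherian (R : comNzRingType) : Prop :=
  forall I : nat -> R -> Prop,
    (forall k, is_ideal (I k)) ->
    (forall k x, I k x -> I k.+1 x) ->
    exists N, forall m, (N <= m)%N -> forall x, I m x -> I N x.

Definition irreducible_elt (R : idomainType) (a : R) : Prop :=
  [/\ a != 0, a \isn't a GRing.unit &
      (forall b c, a = b * c -> b \is a GRing.unit \/ c \is a GRing.unit)].

Definition associated (R : idomainType) (a b : R) : Prop :=
  exists2 u, u \is a GRing.unit & a = u * b.

Definition UFD (R : idomainType) : Prop :=
  (forall a : R, a != 0 -> a \isn't a GRing.unit ->
     exists s : seq R, (forall x, x \in s -> irreducible_elt x) /\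
                       a = \prod_(x <- s) x) /\
  (forall s1 s2 : seq R,
     (forall x, x \in s1 -> irreducible_elt x) ->
     (forall x, x \in s2 -> irreducible_elt x) ->
     \prod_(x <- s1) x = \prod_(x <- s2) x ->
     exists s2' : seq R, [/\ perm_eq s2 s2', size s1 = size s2' &
        forall i, (i < size s1)%N -> associated (nth 0 s1 i) (nth 0 s2' i)]).

(* standard pairing R^k x (R^k)^* -> R (dual bases identified) *)
Definition dot (R : comNzRingType) k (u v : 'cV[R]_k) : R := \sum_i u i 0 * v i 0.

(* the form beta on H (+) H^* = 'cV_(n + n): first n coords = H, last n = H^* *)
Definition beta (R : comNzRingType) n (x y : 'cV[R]_(n + n)) : R :=
  dot (dsubmx x) (usubmx y) + dot (dsubmx y) (usubmx x).

Definition exact_at (R : comNzRingType) a b c (A : 'M[R]_(a, b)) (B : 'M[R]_(b, c)) : Prop :=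
  A *m B = 0 /\ forall v : 'cV[R]_b, A *m v = 0 -> exists w, v = B *m w.

(* acyclic complex 0 -> B0^* -D4-> B1^* -D3-> H+H^* -D2-> B1 -D1-> B0 *)
Definition acyclic4 (R : comNzRingType) b0 b1 h
    (D4 : 'M[R]_(b1, b0)) (D3 : 'M[R]_(h, b1))
    (D2 : 'M[R]_(b1, h)) (D1 : 'M[R]_(b0, b1)) : Prop :=
  [/\ forall v : 'cV[R]_b0, D4 *m v = 0 -> v = 0,
      exact_at D3 D4, exact_at D2 D3, exact_at D1 D2 & D1 *m D2 = 0].

(* omega : Ext R n, omega S = coefficient of e_{i1} /\ ... /\ e_{ik}, S = {i1<...<ik} *)
Notation Ext R n := {ffun {set 'I_n} -> R%type}.

Definition ext_sign (R : comNzRingType) n (T : {set 'I_n}) (i : 'I_n) : R :=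
  (-1) ^+ #|[set j in T | (j < i)%N]|.

Definition wedge1 (R : comNzRingType) n (f : 'cV[R]_n) (w : Ext R n) : Ext R n :=
  [ffun T : {set 'I_n} => \sum_(i in T) ext_sign R T i * f i 0 * w (T :\ i)].

Definition contr (R : comNzRingType) n (f' : 'cV[R]_n) (w : Ext R n) : Ext R n :=
  [ffun T : {set 'I_n} => \sum_(i in ~: T) ext_sign R T i * f' i 0 * w (i |: T)].

Definition clif (R : comNzRingType) n (x : 'cV[R]_(n + n)) (w : Ext R n) : Ext R n :=
  wedge1 (usubmx x) w + contr (dsubmx x) w.

Definition ext_odd (R : comNzRingType) n (s : Ext R n) : Prop :=
  forall S : {set 'I_n}, ~~ odd #|S| -> s S = 0.

Definition deg1 (R : comNzRingType) n (s : Ext R n) : 'cV[R]_n := \col_i s [set i].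

Definition escale (R : comNzRingType) n (t : R) (w : Ext R n) : Ext R n :=
  [ffun S => t * w S].

(* P not in Supp H_0(B), H_0(B) = coker D1: every b/1 vanishes in (B0 / im D1)_P *)
Definition notin_supp_coker (R : comNzRingType) b0 b1 (P : R -> Prop)
    (D1 : 'M[R]_(b0, b1)) : Prop :=
  forall b : 'cV[R]_b0, exists t, ~ P t /\ exists v, t *: b = D1 *m v.

(* the image of s generates the R_P-module
   { omega in (Ext H)_P : x . omega = 0 for all x in (im D3)_P } *)
Definition spinor_generates (R : comNzRingType) n b1 (P : R -> Prop)
    (D3 : 'M[R]_(n + n, b1)) (s : Ext R n) : Prop :=
  (forall v : 'cV[R]_b1, exists2 t, ~ P t & escale t (clif (D3 *m v) s) = 0) /\
  (forall w : Ext R n,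
     (forall v : 'cV[R]_b1, exists2 t, ~ P t & escale t (clif (D3 *m v) w) = 0) ->
     exists r t c, [/\ ~ P t, ~ P c & escale c (escale t w - escale r s) = 0]).

From HB Require Import structures.
From mathcomp Require Import all_boot all_order all_algebra.
Import GRing.Theory.
Set Implicit Arguments.
Unset Strict Implicit.
Local Open Scope ring_scope.

(* Both compositions vanish for formal reasons.  Since [delta_2] is the
   [beta]-adjoint of [delta_3] and [delta_2 delta_3 = 0], the image of
   [delta_3] is totally isotropic for [beta]; pairing [delta_3 u = (s_1, 0)]
   with [delta_3 v] then says exactly that [d_2 v] kills [s_1], i.e.
   [d_1 d_2 = 0].  Finally [d_2 d_3 = (pi delta_3 delta_4, pi delta_3 u)]
   vanishes because [delta_3 delta_4 = 0] and [delta_3 u] lies in [H]. *)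

Section Pairings.

Variable R : comNzRingType.

Lemma dot0l k (x : 'cV[R]_k) : dot 0 x = 0.
Proof. by rewrite /dot big1 // => i _; rewrite mxE mul0r. Qed.

Lemma dot0r k (x : 'cV[R]_k) : dot x 0 = 0.
Proof. by rewrite /dot big1 // => i _; rewrite mxE mulr0. Qed.

Lemma dotC k (x y : 'cV[R]_k) : dot x y = dot y x.
Proof. by apply: eq_bigr => i _; rewrite mulrC. Qed.

Lemma trmx_mul_eq0 m k (x : 'cV[R]_m) (A : 'M[R]_(m, k)) :
  (forall v, dot x (A *m v) = 0) -> x^T *m A = 0.
Proof.
move=> xA0; apply/matrixP => i j; rewrite !mxE -[RHS](xA0 (delta_mx j 0)).
by rewrite -colE; apply: eq_bigr => l _; rewrite !mxE (ord1 i).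
Qed.

Lemma beta_col_mx0 n (f : 'cV[R]_n) (y : 'cV[R]_(n + n)) :
  beta (col_mx f 0) y = dot (dsubmx y) f.
Proof. by rewrite /beta col_mxKd col_mxKu dot0l add0r. Qed.

Lemma beta_adjoint_isotropic n b (D3 : 'M[R]_(n + n, b)) (D2 : 'M[R]_(b, n + n)) :
  (forall v y, dot v (D2 *m y) = beta (D3 *m v) y) -> D2 *m D3 = 0 ->
  forall v w, beta (D3 *m v) (D3 *m w) = 0.
Proof. by move=> adj D23 v w; rewrite -adj mulmxA D23 mul0mx dot0r. Qed.

End Pairings.

Theorem mainTheorem8 (R : idomainType) (p q : nat)
    (D4 : 'M[R]_(p + q, q - 2)) (D3 : 'M[R]_((p + 2) + (p + 2), p + q))
    (D2 : 'M[R]_(p + q, (p + 2) + (p + 2))) (D1 : 'M[R]_(q - 2, p + q))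
    (s : Ext R (p + 2)) (u : 'cV[R]_(p + q)) :
  noetherian R -> UFD R -> (2%:R : R) \is a GRing.unit ->
  (1 <= p)%N -> (3 <= q)%N ->
  acyclic4 D4 D3 D2 D1 ->
  (forall (v : 'cV[R]_(p + q)) (y : 'cV[R]_((p + 2) + (p + 2))),
      dot v (D2 *m y) = beta (D3 *m v) y) ->
  (forall (b : 'cV[R]_(q - 2)) (v : 'cV[R]_(p + q)),
      dot b (D1 *m v) = dot (D4 *m b) v) ->
  ext_odd s ->
  (forall P : R -> Prop, is_prime_ideal P -> notin_supp_coker P D1 ->
      spinor_generates P D3 s) ->
  D3 *m u = col_mx (deg1 s) 0 ->
  (deg1 s)^T *m dsubmx D3 = 0 /\ dsubmx D3 *m row_mx D4 u = 0.
Proof.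
move=> _ _ _ _ _ [_ [D34 _] [D23 _] _ _] adj _ _ _ hu.
split.
  apply: trmx_mul_eq0 => v.
  have := beta_adjoint_isotropic adj D23 u v.
  by rewrite hu beta_col_mx0 mul_dsub_mx dotC.
by rewrite mul_mx_row !mul_dsub_mx D34 hu col_mxKd linear0 row_mx0.
Qed.
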